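(* Let $\mathcal{M}=(W,R,V)$ be a Kripke model, $w_0\in W$, $\varphi_0$ a sentence of the modal $\mu$-calculus and $\Gamma$ an ordinal. Then every play of the $\Gamma$-bounded evaluation game $(\mathcal{M},w_0,\varphi_0,\Gamma)$ ends after finitely many rounds, i.e. reaches a position in which one of the players wins.
   Context: Formulae of the modal $\mu$-calculus over a set $\Phi$ of proposition symbols and a set $\Lambda$ of label symbols: $\varphi ::= p \mid \neg p \mid X \mid \varphi\vee\varphi \mid \varphi\wedge\varphi \mid \Diamond\varphi \mid \Box\varphi \mid \mu X\varphi \mid \nu X\varphi$ with $p\in\Phi$, $X\in\Lambda$. $\mathrm{Sub}(\varphi)$ is the set of nodes (occurrences) of the syntax tree of $\varphi$; $\mathrm{Sub}_{\mu\nu}(\varphi)$ is the set of those occurrences of the form $\mu X\psi$ or $\nu X\psi$. A label occurrence $X$ is free if it is not inside any subformula $\mu X\psi$ or $\nu X\psi$; a sentence has no free label occurrences. For an occurrence $X$ in a sentence $\varphi_0$, its reference formula $\mathrm{rf}(X)$ is the nearest ancestor of that occurrence in the syntax tree of the form $\mu X\psi$ or $\nu X\psi$ (same label $X$). A Kripke model is $\mathcal{M}=(W,R,V)$ with $W\neq\emptyset$, $R\subseteq W\times W$, $V:\Phi\to\mathcal{P}(W)$. The $\Gamma$-bounded evaluation game $(\mathcal{M},w_0,\varphi_0,\Gamma)$ is played by Eloise and Abelard. Positions are $(w,\varphi,c)$ with $w\in W$, $\varphi\in\mathrm{Sub}(\varphi_0)$ and $c:\mathrm{Sub}_{\mu\nu}(\varphi_0)\to\{\gamma\mid\gamma\le\Gamma\}$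 a clock mapping. The initial position is $(w_0,\varphi_0,c_0)$ with $c_0(\theta)=\Gamma$ for all $\theta$. Rules: at $(w,p,c)$ Eloise wins iff $w\in V(p)$, else Abelard wins; at $(w,\neg p,c)$ Eloise wins iff $w\notin V(p)$, else Abelard wins; at $(w,\psi\vee\theta,c)$ Eloise chooses the next position $(w,\psi,c)$ or $(w,\theta,c)$; at $(w,\psi\wedge\theta,c)$ Abelard chooses likewise; at $(w,\Diamond\psi,c)$ Eloise chooses $v$ with $wRv$ and play moves to $(v,\psi,c)$, and Abelard wins if no such $v$ exists; at $(w,\Box\psi,c)$ Abelard chooses $v$ with $wRv$ and play moves to $(v,\psi,c)$, and Eloise wins if no such $v$ exists; at $(w,\mu X\psi,c)$ Eloise chooses an ordinal $\gamma<\Gamma$ and play moves to $(w,\psi,c[\gamma/\mu X\psi])$ (where $c[\gamma/\theta]$ agrees with $c$ except that it sends $\theta$ to $\gamma$); at $(w,\nu X\psi,c)$ Abelard chooses $\gamma<\Gamma$ and play moves to $(w,\psi,c[\gamma/\nu X\psi])$. At $(w,X,c)$, let $\gamma=c(\mathrm{rf}(X))$. If $\mathrm{rf}(X)=\mu X\psi$: if $\gamma=0$ Abelard wins; otherwise Eloise chooses $\gamma'<\gamma$ and play moves to $(w,\psi,c')$ where $c'(\mu X\psi)=\gamma'$, $c'(\theta)=\Gamma$ for every $\theta\in\mathrm{Sub}_{\mu\nu}(\varphi_0)$ lying inside $\psi$, and $c'(\theta)=c(\theta)$ otherwise. If $\mathrm{rf}(X)=\nu X\psi$: the same with roles swapped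 (if $\gamma=0$ Eloise wins; otherwise Abelard chooses $\gamma'<\gamma$, with the same update of the clock mapping). Each application of a rule is one round. *)

From mathcomp Require Import all_boot.
Set Implicit Arguments. Unset Strict Implicit. Unset Printing Implicit Defensive.

(* Formulae of the modal mu-calculus; P = proposition symbols (Phi),
   L = label symbols (Lambda, needs decidable equality). *)
Inductive form (P : Type) (L : eqType) : Type :=
  | FProp of P
  | FNProp of P
  | FVar of L
  | FOr of form P L & form P L
  | FAnd of form P L & form P L
  | FDia of form P L
  | FBox of form P L
  | FMu of L & form P L
  | FNu of L & form P L.

Arguments FProp {P L}. Arguments FNProp {P L}. Arguments FVar {P L}.
Arguments FOr {P L}. Arguments FAnd {P L}. Arguments FDia {P L}.
Arguments FBox {P L}. Arguments FMu {P L}. Arguments FNu {P L}.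

(* Occurrences (nodes of the syntax tree) are addresses: the sequence of
   child indices (0 = first/only child, 1 = second child) from the root. *)
Definition addr := seq nat.

Fixpoint subf (P : Type) (L : eqType) (phi : form P L) (a : addr)
  : option (form P L) :=
  match a with
  | [::] => Some phi
  | i :: a' =>
    match phi, i with
    | FOr f _, 0 | FAnd f _, 0 => subf f a'
    | FOr _ g, 1 | FAnd _ g, 1 => subf g a'
    | FDia f, 0 | FBox f, 0 | FMu _ f, 0 | FNu _ f, 0 => subf f a'
    | _, _ => None
    end
  end.

Definition binder_label (P : Type) (L : eqType) (o : option (form P L))
  : option L :=
  match o with
  | Some (FMu X _) | Some (FNu X _) => Some X
  | _ => None
  end.

Definition is_fixnode (P : Type) (L : eqType) (phi0 : form P L) (t : addr)
  : bool := binder_label (subf phi0 t) != None.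

(* Reference formula of the occurrence of label X at address a in phi0:
   the nearest (longest) proper prefix of a whose node is mu X _ or nu X _. *)
Definition rf (P : Type) (L : eqType) (phi0 : form P L) (a : addr) (X : L)
  : option addr :=
  last None [seq Some b | b <- [seq take i a | i <- iota 0 (size a)]
                        & binder_label (subf phi0 b) == Some X].

Definition sentence (P : Type) (L : eqType) (phi0 : form P L) : Prop :=
  forall (a : addr) (X : L), subf phi0 a = Some (FVar X) -> rf phi0 a X <> None.

(* Ordinals: the ordinals are represented by an arbitrary type O with a
   strict well-founded total order lt. *)
Definition is_ordinal_order (O : Type) (lt : O -> O -> Prop) : Prop :=
  well_founded lt /\
  (forall x y z, lt x y -> lt y z -> lt x z) /\
  (forall x y, lt x y \/ x = y \/ lt y x).

(* Positions (w, phi, c): phi given by its address in phi0; the clock mapping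
   c is a function on addresses, only its values on Sub_{mu nu}(phi0) matter. *)
Definition position (W O : Type) : Type := (W * addr * (addr -> O))%type.

Definition initial_position (W O : Type) (w0 : W) (Gamma : O) : position W O :=
  (w0, [::], fun _ => Gamma).

(* One round of the Gamma-bounded evaluation game: p --> q is a legal move
   (of whichever player is to move at p).  Winning/terminal positions have
   no successors. *)
Definition game_move (P : Type) (L : eqType) (W : Type) (R : W -> W -> Prop)
  (O : Type) (lt : O -> O -> Prop) (phi0 : form P L) (Gamma : O)
  (p q : position W O) : Prop :=
  let: (w, a, c) := p in
  let: (w', a', c') := q in
  match subf phi0 a with
  | Some (FOr _ _) | Some (FAnd _ _) =>
      w' = w /\ (a' = rcons a 0 \/ a' = rcons a 1) /\ c' = c
  | Some (FDia _) | Some (FBox _) =>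
      R w w' /\ a' = rcons a 0 /\ c' = c
  | Some (FMu _ _) | Some (FNu _ _) =>
      w' = w /\ a' = rcons a 0 /\
      exists g, lt g Gamma /\ c' = (fun t => if t == a then g else c t)
  | Some (FVar X) =>
      match rf phi0 a X with
      | Some b =>
          exists g', lt g' (c b) /\ w' = w /\ a' = rcons b 0 /\
            c' = (fun t => if t == b then g'
                           else if is_fixnode phi0 t && prefix (rcons b 0) t
                                then Gamma else c t)
      | None => False
      end
  | _ => False
  end.

(* Read a position (w, a, c) as the sequence indexed by the depths i <= height phi0: the clock value
   c (take i a) at each fixpoint node on the path a, a neutral value at the other nodes of the path,
   and a top value below the end of the path.  Every round decreases this sequence lexicographically:
   a move into a child replaces the top value at depth size a, and unfolding a label X decreases the
   clock of rf(X), which is a proper prefix of a; the clocks above it are untouched and only the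
   clocks inside it are reset.  Since the clock values are well ordered, so are these sequences. *)

From mathcomp Require Import all_boot zify.

Set Implicit Arguments.
Unset Strict Implicit.
Unset Printing Implicit Defensive.

Lemma wf_no_descending_chain (T : Type) (r : T -> T -> Prop) (f : nat -> T) :
  well_founded r -> ~ (forall n, r (f n.+1) (f n)).
Proof.
move=> wf_r desc.
suff no_acc : forall x, Acc r x -> forall n, f n <> x.
  exact: no_acc (f 0) (wf_r _) 0 erefl.
move=> x; elim=> {}x _ IH n fnE.
by apply: (IH (f n.+1)) (erefl _); rewrite -fnE.
Qed.

Section TopExtension.
Variables (T : Type) (r : T -> T -> Prop).

Definition lt_top (x y : option T) : Prop :=
  match x, y with
  | Some a, Some b => r a b
  | Some _, None => True
  | None, _ => False
  end.

Lemma lt_top_wf : well_founded r -> well_founded lt_top.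
Proof.
move=> wf_r.
have acc_some : forall a, Acc lt_top (Some a).
  move=> a; elim: (wf_r a) => {}a _ IH.
  by constructor=> [[b|]] /= => [/IH | []].
by constructor=> [[b|]] /= => [_ | []]; apply: acc_some.
Qed.

End TopExtension.

Section Lexicographic.
Variables (T : Type) (r : T -> T -> Prop).

Fixpoint lex_lt (s t : seq T) : Prop :=
  match s, t with
  | x :: s', y :: t' => (r x y /\ size s' = size t') \/ (x = y /\ lex_lt s' t')
  | _, _ => False
  end.

Lemma lex_lt_size s t : lex_lt s t -> size s = size t.
Proof.
elim: s t => [|x s IH] [|y t] //=.
by case=> [[_ ->] | [_ /IH ->]].
Qed.

Lemma lex_lt_wf : well_founded r -> well_founded lex_lt.
Proof.
move=> wf_r.
suff acc_size : forall n s, size s = n -> Acc lex_lt s by move=> s; exact: acc_size.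
elim=> [|n IHn] [|x s] /= sizeE; try discriminate.
  by constructor=> [[|y t]] [].
case: sizeE; elim: (wf_r x) s => {}x _ IHx s sizes.
have acc_s := IHn s sizes; elim: acc_s sizes => {}s _ IHs sizes.
constructor=> [[|y t]] /=; first by case.
case=> [[ryx sizet] | [-> lts]].
- by apply: IHx => //; rewrite sizet.
- by apply: (IHs t lts); rewrite (lex_lt_size lts).
Qed.

Lemma lex_lt_map_iota (f g : nat -> T) m n k :
  m <= k < m + n -> (forall i, i < k -> f i = g i) -> r (f k) (g k) ->
  lex_lt (map f (iota m n)) (map g (iota m n)).
Proof.
elim: n m => [|n IH] m; first by rewrite addn0; lia.
move=> k_range fgE rfg /=.
have [kE | k_neq_m] := eqVneq k m.
  by left; split; [rewrite -kE | rewrite !size_map].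
right; split; first by apply: fgE; lia.
by apply: IH => //; lia.
Qed.

End Lexicographic.

Fixpoint height (P : Type) (L : eqType) (f : form P L) : nat :=
  match f with
  | FOr f g | FAnd f g => (maxn (height f) (height g)).+1
  | FDia f | FBox f | FMu _ f | FNu _ f => (height f).+1
  | _ => 0
  end.

Lemma subf_size_le (P : Type) (L : eqType) (phi : form P L) a psi :
  subf phi a = Some psi -> size a <= height phi.
Proof.
elim: a phi => [|i a IH] phi //=.
by case: phi => [p|p|X|f g|f g|f|f|X f|X f]; case: i => [|[|i]] //= /IH /=; lia.
Qed.

Lemma rf_take (P : Type) (L : eqType) (phi0 : form P L) a X b :
  rf phi0 a X = Some b ->
  exists2 k, k < size a & b = take k a /\ binder_label (subf phi0 b) = Some X.
Proof.
have last_some : forall (s : seq addr) x,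
    last x [seq Some y | y <- s] = Some b -> x = Some b \/ b \in s.
  elim=> [|y s IH] x /=; first by left.
  by case/IH=> [[->] | bs]; right; rewrite in_cons ?eqxx ?bs ?orbT.
case/last_some=> //; rewrite mem_filter => /andP [/eqP labelX /mapP [k]].
by rewrite mem_iota => /andP [_ ka] bE; exists k; rewrite -?bE.
Qed.

Section ClockEntries.
Variables (P : Type) (L : eqType) (O : Type) (lt : O -> O -> Prop).
Variable phi0 : form P L.

Definition clock_entry (a : addr) (c : addr -> O) (i : nat) : option (option O) :=
  if i < size a then
    (if is_fixnode phi0 (take i a) then Some (Some (c (take i a))) else Some None)
  else None.

Definition clock_rank (a : addr) (c : addr -> O) : seq (option (option O)) :=
  map (clock_entry a c) (iota 0 (height phi0).+1).

Definition entry_lt := lt_top (lt_top lt).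

Lemma clock_entry_prefix a c k j c' i :
  k <= size a -> (forall t, size t < k -> c' t = c t) -> i < k ->
  clock_entry (rcons (take k a) j) c' i = clock_entry a c i.
Proof.
move=> ka c'E ik; have ia : i < size a by lia.
rewrite /clock_entry size_rcons size_takel // ltnS (ltnW ik) ia.
rewrite -cats1 takel_cat ?size_takel ?(ltnW ik) // take_takel ?(ltnW ik) //.
by rewrite c'E // size_takel //; lia.
Qed.

Lemma clock_entry_rcons_size b j c' :
  clock_entry (rcons b j) c' (size b) =
  if is_fixnode phi0 b then Some (Some (c' b)) else Some None.
Proof.
by rewrite /clock_entry size_rcons ltnSn -cats1 takel_cat // take_size.
Qed.

Lemma clock_entry_size a c : clock_entry a c (size a) = None.
Proof. by rewrite /clock_entry ltnn. Qed.

Lemma clock_entry_lt_size a c k :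
  k < size a -> clock_entry a c k =
  if is_fixnode phi0 (take k a) then Some (Some (c (take k a))) else Some None.
Proof. by rewrite /clock_entry => ->. Qed.

Lemma game_move_entry_lt (W : Type) (R : W -> W -> Prop) (Gamma : O)
    w a c w' a' c' :
  game_move R lt phi0 Gamma (w, a, c) (w', a', c') ->
  exists2 k, k <= height phi0 &
    (forall i, i < k -> clock_entry a' c' i = clock_entry a c i) /\
    entry_lt (clock_entry a' c' k) (clock_entry a c k).
Proof.
rewrite /game_move; case subfE: (subf phi0 a) => [f|] //.
have into_child : forall j c2,
    (forall t, size t < size a -> c2 t = c t) ->
    exists2 k, k <= height phi0 &
      (forall i, i < k -> clock_entry (rcons a j) c2 i = clock_entry a c i) /\
      entry_lt (clock_entry (rcons a j) c2 k) (clock_entry a c k).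
  move=> j c2 c2E; exists (size a); first exact: subf_size_le subfE.
  split; last by rewrite clock_entry_size clock_entry_rcons_size; case: ifP.
  by move=> i; have := @clock_entry_prefix a c (size a) j c2 i (leqnn _) c2E; rewrite take_size.
have update_above : forall g t, size t < size a ->
    (if t == a then g else c t) = c t.
  by move=> g t ta; case: eqP => // tE; move: ta; rewrite tE ltnn.
case: f subfE => [p|p|X|f g|f g|f|f|X f|X f] subfE //.
- case rfE: (rf phi0 a X) => [b|] //.
  move=> [g' [g'lt [_ [-> ->]]]].
  have [k ka [bE labelX]] := rf_take rfE.
  have kb : size b = k by rewrite bE size_takel //; lia.
  have fixb : is_fixnode phi0 b by rewrite /is_fixnode labelX.
  exists k; first by have := subf_size_le subfE; lia.
  split.
    move=> i ik; rewrite bE; apply: clock_entry_prefix => //; first lia.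
    (* clocks strictly inside rf(X) are reset, but those nodes lie below depth k *)
    move=> t tk; rewrite -bE; case: eqP => [tE | _]; first by move: tk; rewrite tE kb ltnn.
    case: ifP => // /andP [_ /size_prefix]; rewrite size_rcons kb => kt.
    by have := ltn_trans kt tk; rewrite ltnn.
  rewrite -{1}kb clock_entry_rcons_size clock_entry_lt_size // -bE fixb.
  by rewrite /= eqxx.
- by move=> [_ [[->|->] ->]]; apply: into_child.
- by move=> [_ [[->|->] ->]]; apply: into_child.
- by move=> [_ [-> ->]]; apply: into_child.
- by move=> [_ [-> ->]]; apply: into_child.
- by move=> [_ [-> [g [_ ->]]]]; apply: into_child; apply: update_above.
- by move=> [_ [-> [g [_ ->]]]]; apply: into_child; apply: update_above.
Qed.

Lemma game_move_rank_lt (W : Type) (R : W -> W -> Prop) (Gamma : O)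
    w a c w' a' c' :
  game_move R lt phi0 Gamma (w, a, c) (w', a', c') ->
  lex_lt entry_lt (clock_rank a' c') (clock_rank a c).
Proof.
move=> move_wc; have [k kh [eq_before lt_at]] := game_move_entry_lt move_wc.
by apply: (lex_lt_map_iota (k := k)) => //; lia.
Qed.

End ClockEntries.

Theorem proposition1 (P : Type) (L : eqType)
  (W : Type) (R : W -> W -> Prop) (V : P -> W -> Prop) (w0 : W)
  (phi0 : form P L) (O : Type) (lt : O -> O -> Prop) (Gamma : O) :
  is_ordinal_order lt ->
  sentence phi0 ->
  ~ (exists play : nat -> position W O,
        play 0 = initial_position w0 Gamma /\
        forall n, game_move R lt phi0 Gamma (play n) (play n.+1)).
Proof.
move=> [wf_lt _] _ [play [_ moves]].
pose rank (p : position W O) := let: (_, a, c) := p in clock_rank phi0 a c.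
apply: (@wf_no_descending_chain _ _ (rank \o play)).
  exact/lex_lt_wf/lt_top_wf/lt_top_wf.
move=> n /=; have := moves n.
case: (play n) => [[w a] c]; case: (play n.+1) => [[w' a'] c'].
exact: game_move_rank_lt.
Qed.
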